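(* The monoid $\mathrm{rps}$ does not satisfy any non-trivial identity.
   Context: Let $\mathcal{A}=\{1<2<3<\cdots\}$. An rPS tableau is a finite (possibly empty) sequence of nonempty bottom-justified columns of boxes filled with elements of $\mathcal{A}$, such that the entries of each column are weakly decreasing from top to bottom and the bottom entries of the columns form a strictly increasing sequence from left to right. Right insertion of a symbol $a$ into an rPS tableau $B$: if $a$ is strictly greater than every entry of the bottom row, append a new column consisting of $a$ at the right end; otherwise, let $z$ be the leftmost bottom-row entry with $z\geq a$ and put $a$ in a new box at the bottom of the column of $z$ (the previous entries of that column move up one box). For $w=w_1\cdots w_k$, $\mathfrak{R}_r(w)$ is obtained by starting with the empty tableau and right-inserting $w_1,\dots,w_k$ in order. The monoid $\mathrm{rps}$ is the quotient of $\mathcal{A}^*$ by the congruence $u\equiv v\iff\mathfrak{R}_r(u)=\mathfrak{R}_r(v)$. An identity is a formal equality $u=v$ of words over a countable alphabet of variables; it is non-trivial if $u\neq v$ as words; a monoid $M$ satisfies it if equality holds under every substitution of elements of $M$ for the variables. *)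

From mathcomp Require Import all_boot.
Set Implicit Arguments. Unset Strict Implicit. Unset Printing Implicit Defensive.

(* Letters of the alphabet A = {1 < 2 < 3 < ...} are positive naturals
   (ordered by the usual order on nat).  A word is a [seq nat]. *)
Definition letter_ok (a : nat) : bool := 0 < a.

(* An rPS tableau is a sequence of columns (left to right); each column is
   stored as a list read from BOTTOM to TOP, so the head of a column is its
   bottom entry.  (Tableaux produced by insertion are always nonempty-column
   rPS tableaux; equality of tableaux is equality of this representation.) *)
Definition tableau := seq (seq nat).

Fixpoint rins (B : tableau) (a : nat) : tableau :=
  match B with
  | [::] => [:: [:: a]]
  | c :: B' => if a <= head a c then (a :: c) :: B' else c :: rins B' a
  end.

Definition Rr (w : seq nat) : tableau := foldl rins [::] w.

(* The monoid rps = A^* / ==, where u == v iff Rr u = Rr v.  Every element of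
   rps is the class of some word over A, and the product of classes is the
   class of the concatenation.  Hence evaluating a word over variables
   (variables are nat) under a substitution of elements of rps amounts to
   choosing a representative word sigma x over A for each variable x and
   concatenating. *)
Definition subst (sigma : nat -> seq nat) (u : seq nat) : seq nat :=
  flatten (map sigma u).

Definition rps_satisfies (u v : seq nat) : Prop :=
  forall sigma : nat -> seq nat,
    (forall x, all letter_ok (sigma x)) ->
    Rr (subst sigma u) = Rr (subst sigma v).

From mathcomp Require Import all_boot zify.

Set Implicit Arguments.
Unset Strict Implicit.
Unset Printing Implicit Defensive.

(* Write u = p s and v = p y t, where s is empty or starts with a letter
   x <> y, and let n - 1 be the number of x in p.  Substitute x by the word
   n (n-1) ... 1, y by the letter n+1 and every other variable by the empty
   word.  While fewer than n copies of x have been read, the bottom row of the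
   tableau is 1 ... k with k < n, every inserted n+1 lands in the column just
   right of it, and the next x moves that column into the first n columns;
   once the bottom row is 1 ... n, the letters n+1 start a new column.  So the
   number of n+1 in the first n columns is the number of y read before the
   n-th x, and that number differs for u and v. *)

Definition desc (n : nat) : seq nat := rev (iota 1 n).

Definition column (s : seq nat) : tableau := if s is [::] then [::] else [:: s].

Definition dup_bottom (c : seq nat) : seq nat := head 0 c :: c.

Lemma rins_cat L R a :
  all (fun c => 0 < head 0 c < a) L -> rins (L ++ R) a = L ++ rins R a.
Proof.
elim: L => [|[|h c] L IH] //= /andP [/andP [_ ha] HL].
by rewrite leqNgt ha IH.
Qed.

Lemma rins_column s a : a <= head a s -> rins (column s) a = column (a :: s).
Proof. by case: s => [|h s] //= ->. Qed.

Lemma bottoms_iota_lt L k a :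
  map (head 0) L = iota 1 k -> k < a -> all (fun c => 0 < head 0 c < a) L.
Proof.
move=> HL ka; apply/allP => c Lc.
have : head 0 c \in iota 1 k by rewrite -HL map_f.
rewrite mem_iota; lia.
Qed.

Lemma foldl_rins_rev_iota_column L lo len s :
  all (fun c => 0 < head 0 c < lo) L -> all (leq (lo + len)) s ->
  foldl rins (L ++ column s) (rev (iota lo len)) = L ++ column (iota lo len ++ s).
Proof.
elim: len lo => [|len IH] lo HL Hs //=.
rewrite rev_cons foldl_rcons IH; first last.
- by rewrite addSnnS.
- by apply: sub_all HL => c; lia.
rewrite rins_cat // rins_column //.
case: len {IH} Hs => [|len] //=.
by case: s => [|z s] //= /andP [Hz _]; lia.
Qed.

Lemma foldl_rins_desc_bottoms k L R :
  map (head 0) L = iota 1 k -> foldl rins (L ++ R) (desc k) = map dup_bottom L ++ R.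
Proof.
elim: k L R => [|k IH] L R; first by case: L.
rewrite /desc -[k.+1]addn1 iotaD rev_cat /= add1n.
case/lastP: L => [|L [|h c]]; first by case: (iota 1 k).
  by rewrite map_rcons cats1 => /eqP; rewrite eqseq_rcons andbF.
rewrite map_rcons cats1 => /eqP; rewrite eqseq_rcons => /andP [/eqP HL /eqP /= ->].
rewrite cat_rcons rins_cat; last exact: bottoms_iota_lt HL _.
by rewrite /= leqnn IH // map_rcons cat_rcons.
Qed.

Lemma foldl_rins_desc n k L s :
  k <= n -> map (head 0) L = iota 1 k -> all (leq n.+1) s ->
  foldl rins (L ++ column s) (desc n)
  = map dup_bottom L ++ column (iota k.+1 (n - k) ++ s).
Proof.
move=> kn HL Hs.
rewrite /desc -{1}(subnKC kn) iotaD rev_cat foldl_cat add1n.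
rewrite foldl_rins_rev_iota_column ?foldl_rins_desc_bottoms //.
  exact: bottoms_iota_lt HL _.
by rewrite addSn subnKC.
Qed.

Lemma count_flatten_dup_bottom M L :
  M \notin map (head 0) L ->
  count_mem M (flatten (map dup_bottom L)) = count_mem M (flatten L).
Proof.
elim: L => [|c L IH] //=; rewrite inE negb_or => /andP [Mc ML].
by rewrite !count_cat /= IH // eq_sym (negbTE Mc).
Qed.

Lemma map_head_dup_bottom L : map (head 0) (map dup_bottom L) = map (head 0) L.
Proof. by elim: L => [|c L IH] //=; rewrite IH. Qed.

Lemma foldl_flatten_map (T A S : Type) (f : T -> S -> T) (g : A -> seq S) B w :
  foldl f B (flatten (map g w)) = foldl (fun B z => foldl f B (g z)) B w.
Proof. by elim: w B => [|z w IH] B //=; rewrite foldl_cat IH. Qed.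

Fixpoint count_before_nth (y x r : nat) (w : seq nat) : nat :=
  if w is z :: w' then ((z == y) && (0 < r)) + count_before_nth y x (r - (z == x)) w'
  else 0.

Lemma count_before_nth0 y x w : count_before_nth y x 0 w = 0.
Proof. by elim: w => [|z w IH] //=; rewrite sub0n IH andbF. Qed.

Lemma count_before_nth_cat y x r p w :
  count_before_nth y x r (p ++ w)
  = count_before_nth y x r p + count_before_nth y x (r - count_mem x p) w.
Proof. by elim: p r => [|z p IH] r /=; rewrite ?subn0 // IH subnDA addnA. Qed.

Section TwoLetterSubstitution.

Variables (x y n : nat).

Definition subst_xy (z : nat) : seq nat :=
  if z == x then desc n else if z == y then [:: n.+1] else [::].

Lemma subst_xy_letter_ok z : all letter_ok (subst_xy z).
Proof.
rewrite /subst_xy; case: ifP => _.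
  by rewrite all_rev; apply/allP => q; rewrite mem_iota /letter_ok; lia.
by case: ifP.
Qed.

Definition count_first_columns (B : tableau) : nat :=
  count_mem n.+1 (flatten (take n B)).

(* [r] is the number of copies of [x] still missing to complete the bottom
   row [1, ..., n]; until then all the letters [n.+1] sit in one column. *)
Definition shaped (r : nat) (B : tableau) : Prop :=
  exists L m, [/\ B = L ++ column (nseq m n.+1),
                  map (head 0) L = iota 1 (n - r) & r <= n].

Lemma count_first_columns_shaped r L m :
  map (head 0) L = iota 1 (n - r) -> r <= n ->
  count_first_columns (L ++ column (nseq m n.+1))
  = count_mem n.+1 (flatten L) + (if 0 < r then m else 0).
Proof.
move=> HL rn; have sizeL : size L = n - r by rewrite -(size_map (head 0)) HL size_iota.
rewrite /count_first_columns; case: r rn sizeL {HL} => [|r] rn sizeL.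
  by rewrite subn0 in sizeL; rewrite take_size_cat // addn0.
rewrite take_oversize; last by rewrite size_cat sizeL; case: m => /=; lia.
rewrite flatten_cat count_cat; congr addn.
by case: m => [|m] //=; rewrite cats0 count_nseq /= eqxx mul1n.
Qed.

Lemma shaped_rins_desc r B :
  shaped r B ->
  shaped r.-1 (foldl rins B (desc n))
  /\ count_first_columns (foldl rins B (desc n)) = count_first_columns B.
Proof.
move=> [L [m [-> HL rn]]].
have Hn : n.+1 \notin map (head 0) L by rewrite HL mem_iota; lia.
rewrite (foldl_rins_desc (leq_subr r n) HL); last by apply/allP => z /nseqP [->].
rewrite subKn // (count_first_columns_shaped _ HL rn).
have HL' : map (head 0) (map dup_bottom L) = iota 1 (n - r).
  by rewrite map_head_dup_bottom.
have countL : count_mem n.+1 (flatten (map dup_bottom L)) = count_mem n.+1 (flatten L).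
  exact: count_flatten_dup_bottom.
case: r rn HL' {HL} => [|r] rn HL'.
  split; first by exists (map dup_bottom L), m.
  by rewrite (count_first_columns_shaped _ HL' rn) countL.
set col := iota _ _ ++ _.
have -> : map dup_bottom L ++ column col = rcons (map dup_bottom L) col ++ column (nseq 0 n.+1).
  by rewrite cats0 cats1.
have HLcol : map (head 0) (rcons (map dup_bottom L) col) = iota 1 (n - r).
  have -> : n - r = n - r.+1 + 1 by lia.
  by rewrite map_rcons HL' iotaD cats1 add1n.
split; first by exists (rcons (map dup_bottom L) col), 0; split => //; lia.
rewrite (count_first_columns_shaped _ HLcol) ?(ltnW rn) //.
have countcol : count_mem n.+1 col = m.
  rewrite count_cat (count_memPn _); last by rewrite mem_iota; lia.
  by rewrite count_nseq /= eqxx mul1n.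
by rewrite flatten_rcons count_cat countL countcol if_same addn0.
Qed.

Lemma shaped_rins_top r B :
  shaped r B ->
  shaped r (rins B n.+1)
  /\ count_first_columns (rins B n.+1) = count_first_columns B + (0 < r).
Proof.
move=> [L [m [-> HL rn]]].
rewrite rins_cat; last by apply: bottoms_iota_lt HL _; rewrite ltnS leq_subr.
rewrite rins_column; last by case: m.
split; first by exists L, m.+1.
rewrite -[n.+1 :: _]/(nseq m.+1 n.+1) !(count_first_columns_shaped _ HL rn).
by case: (0 < r); rewrite /= ?addn0 // addn1 addnS.
Qed.

Hypothesis neq_xy : x != y.

Lemma shaped_rins_subst_xy r B z :
  shaped r B ->
  shaped (r - (z == x)) (foldl rins B (subst_xy z))
  /\ count_first_columns (foldl rins B (subst_xy z))
     = count_first_columns B + ((z == y) && (0 < r)).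
Proof.
rewrite /subst_xy; case: eqVneq => [-> | _] HB.
  by rewrite (negbTE neq_xy) subn1 addn0; apply: shaped_rins_desc.
by case: eqVneq => [_ | _]; rewrite subn0 ?addn0 //; apply: shaped_rins_top.
Qed.

Lemma shaped_rins_subst r B w :
  shaped r B ->
  shaped (r - count_mem x w) (foldl rins B (subst subst_xy w))
  /\ count_first_columns (foldl rins B (subst subst_xy w))
     = count_first_columns B + count_before_nth y x r w.
Proof.
rewrite /subst foldl_flatten_map.
elim: w r B => [|z w IH] r B HB /=; first by rewrite subn0 addn0.
have [HB' EB'] := shaped_rins_subst_xy z HB.
have [HB'' ->] := IH _ _ HB'.
by rewrite EB' subnDA addnA.
Qed.

Lemma count_first_columns_Rr_subst w :
  count_first_columns (Rr (subst subst_xy w)) = count_before_nth y x n w.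
Proof.
have shaped0 : shaped n [::] by exists [::], 0; rewrite subnn.
by have [_ ->] := shaped_rins_subst w shaped0.
Qed.

End TwoLetterSubstitution.

Lemma seq_neq_split (u v : seq nat) :
  u <> v ->
  exists p y t s, ~~ prefix [:: y] s
    /\ ((u = p ++ s /\ v = p ++ y :: t) \/ (v = p ++ s /\ u = p ++ y :: t)).
Proof.
elim: u v => [|a u IH] [|b v] uv //.
- by exists [::], b, v, [::]; split; [rewrite prefixs0 | left].
- by exists [::], a, u, [::]; split; [rewrite prefixs0 | right].
case: (eqVneq a b) uv => [-> | ab] uv; last first.
  by exists [::], b, v, (a :: u); split; [rewrite prefix_cons prefix0s andbT eq_sym | left].
have uv' : u <> v by move=> E; apply: uv; rewrite E.
have [p [y [t [s [Hs [[-> ->] | [-> ->]]]]]]] := IH v uv'.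
- by exists (b :: p), y, t, s; split => //; left.
- by exists (b :: p), y, t, s; split => //; right.
Qed.

Lemma rps_not_satisfies_split p y t s :
  ~~ prefix [:: y] s -> ~ rps_satisfies (p ++ s) (p ++ y :: t).
Proof.
move=> Hs.
have [x [neq_xy count_s]] : exists x, x != y /\ count_before_nth y x 1 s = 0.
  case: s Hs => [|z s] Hs; first by exists y.+1; split => //; lia.
  rewrite prefix_cons prefix0s andbT eq_sym in Hs.
  by exists z; rewrite /= (negbTE Hs) eqxx count_before_nth0.
pose n := (count_mem x p).+1.
move/(_ (subst_xy x y n) (subst_xy_letter_ok x y n))/(congr1 (count_first_columns n)).
rewrite !(count_first_columns_Rr_subst n neq_xy) !count_before_nth_cat.
rewrite /n subSnn count_s /= eqxx; lia.
Qed.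

Theorem theorem4p9 : forall u v : seq nat, u <> v -> ~ rps_satisfies u v.
Proof.
move=> u v /seq_neq_split [p [y [t [s [Hs [[-> ->] | [-> ->]]]]]]] uv.
  exact: rps_not_satisfies_split Hs uv.
by apply: (@rps_not_satisfies_split p y t s Hs) => sigma ok; rewrite (uv sigma ok).
Qed.
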